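(* Let $\mathcal{G}=(\mathcal{V},\mathcal{E},\mathcal{W})$ be a directed graph with nonnegative edge weights $w_{(x,y)}$ (with $w_{(x,y)}=0$ when $(x,y)\notin\mathcal{E}$). Let $d(x)=\sum_{y\in\operatorname{Nei}(x)} w_{(x,y)}$ be the generalized out-degree and $N^{in}(y)=\{x : w_{(x,y)}>0\}$ the in-neighbors. Fix $\alpha\in(0,1)$, $\epsilon>0$ and a source node $s\in\mathcal{V}$. Suppose vectors $p_s,r_s\in\mathbb{R}^{\mathcal{V}}$ satisfy the invariant $$p_s(i)+\alpha r_s(i)=(1-\alpha)\sum_{x\in N^{in}(i)}\frac{w_{(x,i)}\,p_s(x)}{d(x)}+\alpha\,1_{i=s}\qquad\text{for all } i\in\mathcal{V}.\qquad (\ast)$$ Consider an edge event $(u,v,\Delta w_{(u,v)})$ with $\Delta w_{(u,v)}\in\mathbb{R}$, transforming $\mathcal{G}$ into $\mathcal{G}'$ with weights $w'_{(u,v)}=w_{(u,v)}+\Delta w_{(u,v)}\ge 0$ and all other weights unchanged, so that $d'(u)=d(u)+\Delta w_{(u,v)}$; assume $d(u)>0$ and $d'(u)>0$. Define $p_s',r_s'$ to agree with $p_s,r_s$ except $$p'_s(u)=p_s(u)\,\frac{d(u)+\Delta w_{(u,v)}}{d(u)},\qquad r'_s(u)=r_s(u)-\frac{\Delta w_{(u,v)}\,p_s(u)}{\alpha\, d(u)},\qquad r'_s(v)=r_s(v)+\frac{1-\alpha}{\alpha}\,\frac{\Delta w_{(u,v)}\,p_s(u)}{d(u)}$$ (all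 right-hand sides computed from the values before the event; if $u=v$ both residual updates are applied to $r_s(u)$). Then $p'_s,r'_s$ satisfy the invariant $(\ast)$ with respect to $\mathcal{G}'$ (i.e., with $w',d'$ in place of $w,d$). Consequently, applying these rules successively to each event of a sequence of edge events (each time with respect to the current graph) and then running the weighted forward push procedure on the final graph yields vectors $p_s,r_s$ that satisfy $(\ast)$ with respect to the final graph and, upon termination, satisfy $|r_s(i)|\le\epsilon\, d(i)$ for all $i$, so that $p_s$ approximates the Personalized PageRank vector of $s$.
   Context: Weighted forward push procedure (input $p_s,r_s$, graph, $\epsilon,\alpha$): while there exists a node $x$ with $|r_s(x)|>\epsilon d(x)$, perform $\textsc{Push}(x)$: set $p_s(x)\mathrel{+}=\alpha r_s(x)$; for each out-neighbor $y$ of $x$, set $r_s(y)\mathrel{+}=(1-\alpha)r_s(x)w_{(x,y)}/d(x)$; then set $r_s(x)=0$. The Personalized PageRank vector of $s$ is $\pi_s=(1-\alpha)(D^{-1}A)^\top\pi_s+\alpha 1_s$, where $A(x,y)=w_{(x,y)}$ and $D=\operatorname{diag}(d)$; $1_s$ is the indicator vector of $s$ and $1_{i=s}$ is $1$ if $i=s$ and $0$ otherwise. *)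

From HB Require Import structures.
From mathcomp Require Import all_boot all_order all_algebra.
From Stdlib Require Import Relations.
Set Implicit Arguments. Unset Strict Implicit. Unset Printing Implicit Defensive.
Import Order.TTheory GRing.Theory Num.Theory.
Local Open Scope ring_scope.

(* A weighted directed graph on the finite vertex set V is given by its
   weight function w : V -> V -> R, with w x y = 0 iff (x,y) is not an edge. *)
Section PPR.
Variables (R : realFieldType) (V : finType).

Local Notation weights := (V -> V -> R).

Definition nonneg_weights (w : weights) : Prop := forall x y, 0 <= w x y.

Definition outdeg (w : weights) (x : V) : R := \sum_(y | 0 < w x y) w x y.

Definition ppr_invariant (w : weights) (alpha : R) (s : V) (p r : V -> R) : Prop :=
  forall i : V,
    p i + alpha * r i =
    (1 - alpha) * (\sum_(x | 0 < w x i) w x i * p x / outdeg w x)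
    + alpha * (i == s)%:R.

Definition upd_w (w : weights) (u v : V) (dw : R) : weights :=
  fun x y => if (x == u) && (y == v) then w u v + dw else w x y.

Definition upd_p (w : weights) (p : V -> R) (u : V) (dw : R) : V -> R :=
  fun x => if x == u then p u * ((outdeg w u + dw) / outdeg w u) else p x.

Definition upd_r (w : weights) (alpha : R) (p r : V -> R) (u v : V) (dw : R)
  : V -> R :=
  fun x => r x
    - (if x == u then dw * p u / (alpha * outdeg w u) else 0)
    + (if x == v then (1 - alpha) / alpha * (dw * p u / outdeg w u) else 0).

Fixpoint valid_events (w : weights) (evs : seq (V * V * R)) : Prop :=
  match evs with
  | [::] => True
  | (u, v, dw) :: evs' =>
      [/\ 0 <= w u v + dw, 0 < outdeg w u, 0 < outdeg w u + dw
        & valid_events (upd_w w u v dw) evs']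
  end.

Fixpoint apply_events (alpha : R) (w : weights) (p r : V -> R)
  (evs : seq (V * V * R)) : weights * (V -> R) * (V -> R) :=
  match evs with
  | [::] => (w, p, r)
  | (u, v, dw) :: evs' =>
      apply_events alpha (upd_w w u v dw) (upd_p w p u dw)
                   (upd_r w alpha p r u v dw) evs'
  end.

Definition push (w : weights) (alpha : R) (x : V) (pr : (V -> R) * (V -> R))
  : (V -> R) * (V -> R) :=
  let: (p, r) := pr in
  ((fun y => if y == x then p x + alpha * r x else p y),
   (fun y => (if y == x then 0 else r y)
             + (if 0 < w x y then (1 - alpha) * r x * w x y / outdeg w x
                else 0))).

Definition push_step (w : weights) (alpha eps : R)
  (pr pr' : (V -> R) * (V -> R)) : Prop :=
  exists x : V, eps * outdeg w x < `|pr.2 x| /\ pr' = push w alpha x pr.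

Definition push_terminated (w : weights) (eps : R) (r : V -> R) : Prop :=
  forall x : V, ~ (eps * outdeg w x < `|r x|).

End PPR.

From HB Require Import structures.
From mathcomp Require Import all_boot all_order all_algebra.
From mathcomp Require Import ring.
From Stdlib Require Import Relations.
Import Order.TTheory GRing.Theory Num.Theory.
Local Open Scope ring_scope.

(* The invariant says that p + alpha r is the image of p under one step of the
   random walk with restart, where each node x sends the mass p(x)/d(x) along
   each unit of out-weight.  An edge event rescales p(u) so that this mass
   p(u)/d(u) is unchanged; the only change in the right-hand side is then the
   extra flow dw p(u)/d(u) into v, and r absorbs both the change of p(u) and
   this new flow.  A push step moves alpha r(x) into p(x) and sends the rest of
   r(x) to the out-neighbours, which again balances both sides. *)

Section PPRInvariant.
Context {R : realFieldType} {V : finType}.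
Implicit Types (w : V -> V -> R) (p r : V -> R).

Definition inflow w p (i : V) : R := \sum_x w x i * p x / outdeg w x.

Lemma nonneg_weight_eq0 {w x y} :
  nonneg_weights w -> ~~ (0 < w x y) -> w x y = 0.
Proof. by move=> w_ge0; rewrite lt0r w_ge0 andbT negbK => /eqP. Qed.

Lemma outdegE w x : nonneg_weights w -> outdeg w x = \sum_y w x y.
Proof. by move=> w_ge0; apply: big_rmcond => y /(nonneg_weight_eq0 w_ge0). Qed.

Lemma ppr_invariantE {w alpha s p r} : nonneg_weights w ->
  ppr_invariant w alpha s p r <->
  forall i, p i + alpha * r i = (1 - alpha) * inflow w p i + alpha * (i == s)%:R.
Proof.
move=> w_ge0; have filterE i :
    \sum_(x | 0 < w x i) w x i * p x / outdeg w x = inflow w p i.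
  apply: big_rmcond => x /(nonneg_weight_eq0 w_ge0) ->.
  by rewrite !mul0r.
by split=> inv i; have := inv i; rewrite filterE.
Qed.

Section EdgeEvent.
Variables (w : V -> V -> R) (u v : V) (dw : R).
Hypotheses (w_ge0 : nonneg_weights w) (wuv_ge0 : 0 <= w u v + dw).

Lemma nonneg_upd_w : nonneg_weights (upd_w w u v dw).
Proof. by move=> x y; rewrite /upd_w; case: ifP => // /andP[/eqP-> /eqP->]. Qed.

Lemma outdeg_upd_w x :
  outdeg (upd_w w u v dw) x = outdeg w x + (x == u)%:R * dw.
Proof.
rewrite !outdegE //; last exact: nonneg_upd_w.
have [->|/negbTE xNu] := eqVneq x u; last by rewrite /upd_w xNu mul0r addr0.
rewrite mul1r (bigD1 v) //= [in RHS](bigD1 v) //= /upd_w !eqxx addrAC.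
by congr (_ + _ + _); apply: eq_bigr => y /negbTE ->; rewrite andbF.
Qed.

Hypotheses (du_neq0 : outdeg w u != 0) (du'_neq0 : outdeg w u + dw != 0).

Lemma upd_p_div_outdeg p x :
  upd_p w p u dw x / outdeg (upd_w w u v dw) x = p x / outdeg w x.
Proof.
rewrite outdeg_upd_w /upd_p; case: eqP => [->|_].
  by rewrite mul1r; field; rewrite du_neq0 du'_neq0.
by rewrite mul0r addr0.
Qed.

Lemma inflow_upd p i :
  inflow (upd_w w u v dw) (upd_p w p u dw) i
  = inflow w p i + (i == v)%:R * (dw * p u / outdeg w u).
Proof.
rewrite /inflow (eq_bigr (fun x => w x i * p x / outdeg w x
                   + ((x == u) && (i == v))%:R * (dw * p u / outdeg w u))).
  rewrite big_split /= -big_distrl /=; congr (_ + _ * _).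
  by rewrite (bigD1 u) //= eqxx big1 ?addr0 // => x /negbTE ->.
move=> x _; rewrite -mulrA upd_p_div_outdeg /upd_w.
have [->|/negbTE xNu] := eqVneq x u; rewrite ?eqxx ?xNu /=; last by ring.
by case: eqP => [->|_] /=; ring.
Qed.

Lemma ppr_invariant_upd alpha s p r : alpha != 0 ->
  ppr_invariant w alpha s p r ->
  ppr_invariant (upd_w w u v dw) alpha s (upd_p w p u dw)
                (upd_r w alpha p r u v dw).
Proof.
move=> alpha_neq0 /(ppr_invariantE w_ge0) inv.
apply/(ppr_invariantE nonneg_upd_w) => i; rewrite inflow_upd /upd_p /upd_r.
have -> : alpha * (i == s)%:R = p i + alpha * r i - (1 - alpha) * inflow w p i.
  by rewrite inv; ring.
case: (eqVneq i u) => [iu|_]; case: (eqVneq i v) => [iv|_] /=; subst;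
  by field; rewrite ?alpha_neq0 ?du_neq0.
Qed.

End EdgeEvent.

Lemma ppr_invariant_push w alpha s p r x :
  ppr_invariant w alpha s p r ->
  ppr_invariant w alpha s (push w alpha x (p, r)).1 (push w alpha x (p, r)).2.
Proof.
move=> inv i /=.
rewrite (eq_bigr (fun y => w y i * p y / outdeg w y
                   + (y == x)%:R * (w x i * (alpha * r x) / outdeg w x))); last first.
  by move=> y _; case: (eqVneq y x) => [->|_] /=; ring.
have pick_x : \sum_(y | 0 < w y i) (y == x)%:R = (0 < w x i)%R%:R :> R.
  rewrite big_mkcond (bigD1 x) //= eqxx big1 ?addr0; first by case: ifP.
  by move=> y /negbTE ->; case: ifP.
rewrite big_split /= -big_distrl /= pick_x.
have -> : alpha * (i == s)%:R
          = p i + alpha * r i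
            - (1 - alpha) * \sum_(y | 0 < w y i) w y i * p y / outdeg w y.
  by rewrite inv; ring.
by case: (eqVneq i x) => [->|_]; case: ifP => _ /=; ring.
Qed.

Lemma ppr_invariant_push_steps {w alpha eps s} {pr pr' : (V -> R) * (V -> R)} :
  clos_refl_trans _ (push_step w alpha eps) pr pr' ->
  ppr_invariant w alpha s pr.1 pr.2 -> ppr_invariant w alpha s pr'.1 pr'.2.
Proof.
elim=> [[p r] _ [x [_ ->]]|//|pr1 pr2 pr3 _ IH12 _ IH23 /IH12 /IH23 //].
exact: ppr_invariant_push.
Qed.

Lemma ppr_invariant_apply_events {alpha s w p r} evs : alpha != 0 ->
  nonneg_weights w -> ppr_invariant w alpha s p r -> valid_events w evs ->
  let: (w', p', r') := apply_events alpha w p r evs in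
  ppr_invariant w' alpha s p' r'.
Proof.
move=> alpha_neq0; elim: evs w p r => [|[[u v] dw] evs IH] w p r //=.
move=> w_ge0 inv [wuv_ge0 du_gt0 du'_gt0 valid].
apply: IH => //; first exact: nonneg_upd_w.
by apply: ppr_invariant_upd; rewrite // gt_eqF.
Qed.

End PPRInvariant.

Theorem theorem1 (R : realFieldType) (V : finType) (alpha eps : R) (s : V) :
  0 < alpha -> alpha < 1 -> 0 < eps ->
  (* single edge event preserves the invariant *)
  (forall (w : V -> V -> R) (p r : V -> R) (u v : V) (dw : R),
      nonneg_weights w ->
      ppr_invariant w alpha s p r ->
      0 <= w u v + dw ->
      0 < outdeg w u -> 0 < outdeg w u + dw ->
      ppr_invariant (upd_w w u v dw) alpha s (upd_p w p u dw)
                (upd_r w alpha p r u v dw))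
  /\
  (* a sequence of events followed by weighted forward push *)
  (forall (w : V -> V -> R) (p r : V -> R) (evs : seq (V * V * R)),
      nonneg_weights w ->
      ppr_invariant w alpha s p r ->
      valid_events w evs ->
      let: (w', p', r') := apply_events alpha w p r evs in
      forall p'' r'' : V -> R,
        clos_refl_trans _ (push_step w' alpha eps) (p', r') (p'', r'') ->
        ppr_invariant w' alpha s p'' r'' /\
        (push_terminated w' eps r'' ->
           forall i : V, `|r'' i| <= eps * outdeg w' i)).
Proof.
move=> alpha_gt0 _ _; have alpha_neq0 := lt0r_neq0 alpha_gt0.
split=> [w p r u v dw w_ge0 inv wuv_ge0 du_gt0 du'_gt0|w p r evs w_ge0 inv valid].
  by apply: ppr_invariant_upd; rewrite // gt_eqF.
have := ppr_invariant_apply_events evs alpha_neq0 w_ge0 inv valid.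
case: apply_events => [[w' p'] r'] inv' p'' r'' steps; split.
  exact: (ppr_invariant_push_steps steps inv').
by move=> terminated i; rewrite leNgt; apply/negP/terminated.
Qed.
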